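(* Let $P,Q,R_0,R_1$ be integers with $P>0$, $Q<0$, $R_0,R_1$ positive integers, and $\gcd(P,Q)=\gcd(R_1,Q)=1$. Let $(R_n)_{n\ge0}$ be given by $R_{n+2}=PR_{n+1}-QR_n$ ($n\ge0$), and let $\alpha,\beta$ be the roots of $x^2-Px+Q$ with $|\alpha|\ge|\beta|$ (here $\alpha>0>\beta$). Then for all positive integers $n,m$ with $n\geq 2$ and $m\leq \lfloor (n+1)/2\rfloor+1$, \[\mathrm{lcm}(R_m,R_{m+1},\dots,R_n)\geq \gcd(R_0,R_1)\left(\frac{R_1+R_0|\beta|}{\gcd(R_0,R_1)}\right)^{\frac{n-1}{2}}\alpha^{\frac{n^2}{4}-\frac{n}{2}-\frac{7}{4}}.\] *)

From Stdlib Require Import Reals ZArith List Lia Lra.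
Open Scope R_scope.

Definition lcm_range (R : nat -> Z) (m n : nat) : Z :=
  fold_right Z.lcm 1%Z (map R (seq m (S n - m))).

From Stdlib Require Import Reals ZArith Znumtheory List Lia Lra.

(* Let U be the Lucas sequence of (P, Q) and g = gcd(R_0, R_1).  From the shift identity
   R_(a+j+1) = U_(j+1) R_(a+1) - Q U_j R_a and gcd(R_i, Q) = 1 one gets
   gcd(R_a, R_(a+j+1)) | g U_(j+1), and induction on the length of a window shows that
   R_a ... R_(a+k) divides (g U_1) ... (g U_k) lcm(R_a, ..., R_(a+k)).  Since
   R_(i+1) - beta R_i = alpha^i (R_1 - beta R_0) and beta < 0, the R_i grow at least like
   (R_1 + |beta| R_0) alpha^(i-2) while U_(j+1) <= alpha^j; comparing both bounds on the
   window [ceil(n/2) + 1, n] gives the stated exponents. *)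

Open Scope Z_scope.

Definition prod_from (x : nat -> Z) (a len : nat) : Z :=
  fold_right Z.mul 1 (map x (seq a len)).

Definition lcm_from (x : nat -> Z) (a len : nat) : Z :=
  fold_right Z.lcm 1 (map x (seq a len)).

Lemma prod_from_S_r x a len :
  prod_from x a (S len) = prod_from x a len * x (a + len)%nat.
Proof.
  unfold prod_from. rewrite seq_S, map_app, fold_right_app. cbn [map fold_right].
  induction (map x (seq a len)) as [|y l IH]; cbn [fold_right]; [ring|].
  rewrite IH. ring.
Qed.

Lemma prod_from_shift x a len :
  prod_from x (S a) len = prod_from (fun i => x (S i)) a len.
Proof. unfold prod_from. now rewrite <- seq_shift, map_map. Qed.

Lemma lcm_from_S_r x a len : (lcm_from x a len | lcm_from x a (S len)).
Proof.
  unfold lcm_from. rewrite seq_S, map_app, fold_right_app.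
  induction (map x (seq a len)) as [|y l IH]; cbn [fold_right].
  - apply Z.divide_1_l.
  - apply Z.lcm_least; [apply Z.divide_lcm_l|].
    apply (Z.divide_trans _ _ _ IH), Z.divide_lcm_r.
Qed.

Lemma lcm_from_app x a d len : (lcm_from x (a + d) len | lcm_from x a (d + len)).
Proof.
  unfold lcm_from. rewrite seq_app, map_app, fold_right_app.
  induction (map x (seq a d)) as [|y l IH]; cbn [fold_right].
  - apply Z.divide_refl.
  - apply (Z.divide_trans _ _ _ IH), Z.divide_lcm_r.
Qed.

Lemma prod_from_pos x a len : (forall i, 0 < x i) -> 0 < prod_from x a len.
Proof.
  intro hx. unfold prod_from.
  induction (seq a len) as [|i l IH]; cbn [map fold_right]; [lia|].
  now apply Z.mul_pos_pos.
Qed.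

Lemma lcm_from_pos x a len : (forall i, 0 < x i) -> 0 < lcm_from x a len.
Proof.
  intro hx. unfold lcm_from.
  induction (seq a len) as [|i l IH]; cbn [map fold_right]; [lia|].
  assert (Z.lcm (x i) (fold_right Z.lcm 1 (map x l)) <> 0).
  { rewrite Z.lcm_eq_0. specialize (hx i). lia. }
  pose proof (Z.lcm_nonneg (x i) (fold_right Z.lcm 1 (map x l))). lia.
Qed.

Lemma lcm_from_le_lcm_range x m n a len :
  (forall i, 0 < x i) -> (m <= a)%nat -> (a + len = S n)%nat ->
  lcm_from x a len <= lcm_range x m n.
Proof.
  intros hx ham hlen. apply Z.divide_pos_le; [now apply lcm_from_pos|].
  unfold lcm_range. fold (lcm_from x m (S n - m)).
  replace a with (m + (a - m))%nat at 1 by lia.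
  replace (S n - m)%nat with (a - m + len)%nat by lia.
  apply lcm_from_app.
Qed.

Lemma prod_divide_lcm (x b : nat -> Z)
  (hgcd : forall a j, (Z.gcd (x a) (x (a + S j)%nat) | b j)) :
  forall k a, (prod_from x a (S k) | prod_from b 0 k * lcm_from x a (S k)).
Proof.
  induction k as [|k IH]; intro a.
  - unfold prod_from, lcm_from. cbn [seq map fold_right].
    rewrite Z.lcm_1_r, Z.mul_1_r, Z.mul_1_l. apply Z.divide_abs_r, Z.divide_refl.
  - set (N := prod_from b 0 k). set (L := lcm_from x a (S (S k))).
    assert (hlast : (prod_from x a (S (S k)) | x (a + S k)%nat * (N * L))).
    { rewrite prod_from_S_r, (Z.mul_comm (prod_from x a (S k))).
      apply Z.mul_divide_mono_l.
      apply (Z.divide_trans _ _ _ (IH a)), Z.mul_divide_mono_l, lcm_from_S_r. }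
    assert (hfirst : (prod_from x a (S (S k)) | x a * (N * L))).
    { apply Z.mul_divide_mono_l.
      apply (Z.divide_trans _ _ _ (IH (S a))), Z.mul_divide_mono_l.
      apply Z.divide_lcm_r. }
    assert (hgcdNL : (prod_from x a (S (S k)) | Z.gcd (x a) (x (a + S k)%nat) * (N * L))).
    { apply Z.divide_abs_r.
      rewrite Z.abs_mul, (Z.abs_eq (Z.gcd _ _)) by apply Z.gcd_nonneg.
      rewrite <- Z.gcd_mul_mono_r. now apply Z.gcd_greatest. }
    apply (Z.divide_trans _ _ _ hgcdNL).
    replace (prod_from b 0 (S k) * L) with (b k * (N * L))
      by (rewrite prod_from_S_r; fold N; cbn [Nat.add]; ring).
    apply Z.mul_divide_mono_r, hgcd.
Qed.

Lemma gcd_pos_r a b : 0 < b -> 0 < Z.gcd a b.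
Proof.
  intro hb. pose proof (Z.gcd_nonneg a b). pose proof (Z.gcd_eq_0_r a b). lia.
Qed.

Lemma gcd_1_divide_l a b c : Z.gcd a b = 1 -> (c | a) -> Z.gcd c b = 1.
Proof.
  intros hab hca. apply Zgcd_1_rel_prime, (rel_prime_div a); [|exact hca].
  now apply Zgcd_1_rel_prime.
Qed.

Section Recurrence.

Variables P Q : Z.

Fixpoint lucasU (n : nat) : Z :=
  match n with
  | O => 0
  | S O => 1
  | S ((S n'') as n') => P * lucasU n' - Q * lucasU n''
  end.

Lemma lucasU_rec k : lucasU (S (S k)) = P * lucasU (S k) - Q * lucasU k.
Proof. reflexivity. Qed.

Variable x : nat -> Z.
Hypothesis x_rec : forall k, x (S (S k)) = P * x (S k) - Q * x k.

Lemma rec_shift a k : x (a + S k)%nat = lucasU (S k) * x (S a) - Q * lucasU k * x a.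
Proof.
  enough (forall k, x (a + S k)%nat = lucasU (S k) * x (S a) - Q * lucasU k * x a
          /\ x (a + S (S k))%nat = lucasU (S (S k)) * x (S a) - Q * lucasU (S k) * x a)
    by apply H.
  clear k. induction k as [|k [IH1 IH2]].
  - rewrite Nat.add_1_r, Nat.add_succ_r, Nat.add_1_r, x_rec. cbn [lucasU]. split; ring.
  - split; [exact IH2|].
    rewrite !Nat.add_succ_r, x_rec, <- !Nat.add_succ_r, IH1, IH2, !lucasU_rec. ring.
Qed.

Lemma rec_eigen (alpha beta : R) :
  IZR P = (alpha + beta)%R -> IZR Q = (alpha * beta)%R ->
  forall i, (IZR (x (S i)) - beta * IZR (x i) = alpha ^ i * (IZR (x 1) - beta * IZR (x 0)))%R.
Proof.
  intros hP hQ i. induction i as [|i IH]; [simpl; ring|].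
  rewrite x_rec, minus_IZR, !mult_IZR, hP, hQ, <- tech_pow_Rmult.
  rewrite (Rmult_assoc alpha (alpha ^ i)), <- IH. ring.
Qed.

Section Coprime.

Hypotheses (PQ_coprime : Z.gcd P Q = 1) (x1Q_coprime : Z.gcd (x 1) Q = 1).

Lemma rec_coprime_Q b : Z.gcd (x (S b)) Q = 1.
Proof.
  induction b as [|b IH]; [exact x1Q_coprime|].
  set (d := Z.gcd (x (S (S b))) Q).
  assert (dQ : (d | Q)) by apply Z.gcd_divide_r.
  assert (dPx : (d | P * x (S b))).
  { replace (P * x (S b)) with (x (S (S b)) + Q * x b) by (rewrite x_rec; ring).
    apply Z.divide_add_r; [apply Z.gcd_divide_l | now apply Z.divide_mul_l]. }
  assert (dx : (d | x (S b))).
  { apply (Z.gauss _ P); [exact dPx|].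
    apply (gcd_1_divide_l Q); [now rewrite Z.gcd_comm | exact dQ]. }
  apply Z.divide_1_r_nonneg; [apply Z.gcd_nonneg|].
  rewrite <- IH. now apply Z.gcd_greatest.
Qed.

Lemma gcd_succ_divide b : (Z.gcd (x b) (x (S b)) | Z.gcd (x 0) (x 1)).
Proof.
  induction b as [|b IH]; [apply Z.divide_refl|].
  set (d := Z.gcd (x (S b)) (x (S (S b)))).
  assert (dx1 : (d | x (S b))) by apply Z.gcd_divide_l.
  assert (dQx : (d | Q * x b)).
  { replace (Q * x b) with (P * x (S b) - x (S (S b))) by (rewrite x_rec; ring).
    apply Z.divide_sub_r; [now apply Z.divide_mul_r | apply Z.gcd_divide_r]. }
  assert (dx : (d | x b)).
  { apply (Z.gauss _ Q); [exact dQx|].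
    exact (gcd_1_divide_l _ _ _ (rec_coprime_Q b) dx1). }
  apply (Z.divide_trans _ _ _ (Z.gcd_greatest _ _ _ dx dx1)), IH.
Qed.

Lemma gcd_divide_lucasU a k :
  (Z.gcd (x a) (x (a + S k)%nat) | Z.gcd (x 0) (x 1) * lucasU (S k)).
Proof.
  set (d := Z.gcd (x a) (x (a + S k)%nat)).
  assert (dx : (d | x a)) by apply Z.gcd_divide_l.
  assert (dUx1 : (d | lucasU (S k) * x (S a))).
  { replace (lucasU (S k) * x (S a)) with (x (a + S k)%nat + Q * lucasU k * x a)
      by (rewrite rec_shift; ring).
    apply Z.divide_add_r; [apply Z.gcd_divide_r | now apply Z.divide_mul_r]. }
  assert (dUx0 : (d | lucasU (S k) * x a)) by now apply Z.divide_mul_r.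
  assert (dU : (d | lucasU (S k) * Z.gcd (x a) (x (S a)))).
  { apply Z.divide_abs_r.
    rewrite Z.abs_mul, (Z.abs_eq (Z.gcd _ _)) by apply Z.gcd_nonneg.
    rewrite <- Z.gcd_mul_mono_l. now apply Z.gcd_greatest. }
  apply (Z.divide_trans _ _ _ dU).
  rewrite Z.mul_comm. apply Z.mul_divide_mono_r, gcd_succ_divide.
Qed.

End Coprime.

Section Positivity.

Hypotheses (P_pos : 0 < P) (Q_nonpos : Q <= 0) (x0_nonneg : 0 <= x 0) (x1_pos : 0 < x 1).

Lemma rec_pos k : 0 <= x k /\ 0 < x (S k).
Proof.
  induction k as [|k [IH0 IH1]]; [lia|].
  split; [lia|]. rewrite x_rec. nia.
Qed.

Lemma rec_succ_le k : x (S k) <= x (S (S k)).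
Proof. destruct (rec_pos k). rewrite x_rec. nia. Qed.

End Positivity.

Lemma rec_pos_all (P_pos : 0 < P) (Q_nonpos : Q <= 0) (x0_pos : 0 < x 0)
  (x1_pos : 0 < x 1) i : 0 < x i.
Proof. destruct i as [|i]; [exact x0_pos|]. apply rec_pos; lia. Qed.

End Recurrence.

Open Scope R_scope.

Lemma IZR_prod_from x a len :
  IZR (prod_from x a len) = fold_right Rmult 1 (map (fun i => IZR (x i)) (seq a len)).
Proof.
  unfold prod_from. induction (seq a len) as [|i l IH]; [reflexivity|].
  cbn [map fold_right]. now rewrite mult_IZR, IH.
Qed.

Lemma Rprod_nonneg (f : nat -> R) (l : list nat) :
  (forall i, In i l -> 0 <= f i) -> 0 <= fold_right Rmult 1 (map f l).
Proof.
  induction l as [|i l IH]; intro hf; cbn [map fold_right]; [lra|].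
  apply Rmult_le_pos; [apply hf, in_eq | apply IH; intros j hj; apply hf, in_cons, hj].
Qed.

Lemma Rprod_le (f g : nat -> R) (l : list nat) :
  (forall i, In i l -> 0 <= f i <= g i) ->
  fold_right Rmult 1 (map f l) <= fold_right Rmult 1 (map g l).
Proof.
  induction l as [|i l IH]; intro hfg; cbn [map fold_right]; [lra|].
  assert (hl : forall j, In j l -> 0 <= f j <= g j) by (intros j hj; apply hfg, in_cons, hj).
  apply Rmult_le_compat; [apply hfg, in_eq | | apply hfg, in_eq | now apply IH].
  apply Rprod_nonneg. intros j hj. apply hl, hj.
Qed.

Lemma Rprod_geometric (c r : R) (l : list nat) :
  fold_right Rmult 1 (map (fun i => c * r ^ i) l) = c ^ length l * r ^ list_sum l.
Proof.
  induction l as [|i l IH]; [simpl; ring|].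
  change (list_sum (i :: l)) with (i + list_sum l)%nat.
  cbn [map fold_right length]. rewrite IH, pow_add. simpl. ring.
Qed.

Section RealBounds.

Variables (P Q : Z) (alpha beta : R).
Hypotheses (P_sum : IZR P = alpha + beta) (Q_prod : IZR Q = alpha * beta)
  (beta_neg : beta < 0) (alpha_ge : 1 - beta <= alpha).

Let P_pos : (0 < P)%Z.
Proof. apply lt_IZR. lra. Qed.

Let Q_nonpos : (Q <= 0)%Z.
Proof. apply le_IZR. nra. Qed.

Lemma lucasU_pos j : (0 < lucasU P Q (S j))%Z.
Proof.
  apply (rec_pos P Q _ (lucasU_rec P Q) P_pos Q_nonpos); cbn; lia.
Qed.

Lemma lucasU_le_pow j : IZR (lucasU P Q (S j)) <= alpha ^ j.
Proof.
  assert (eigen := rec_eigen P Q (lucasU P Q) (lucasU_rec P Q) alpha beta P_sum Q_prod j).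
  assert (U_nonneg : 0 <= IZR (lucasU P Q j)).
  { apply IZR_le. destruct j as [|j]; [apply Z.le_refl|]. apply Z.lt_le_incl, lucasU_pos. }
  change (lucasU P Q 1) with 1%Z in eigen. change (lucasU P Q 0) with 0%Z in eigen.
  nra.
Qed.

Lemma prod_lucasU_le (g : Z) k : (0 <= g)%Z ->
  IZR (prod_from (fun j => g * lucasU P Q (S j))%Z 0 k)
  <= IZR g ^ k * alpha ^ list_sum (seq 0 k).
Proof.
  intro hg. apply IZR_le in hg.
  replace (IZR g ^ k * alpha ^ list_sum (seq 0 k))
    with (fold_right Rmult 1 (map (fun i => IZR g * alpha ^ i) (seq 0 k)))
    by now rewrite Rprod_geometric, length_seq.
  rewrite IZR_prod_from.
  apply Rprod_le. intros j _. rewrite mult_IZR. split.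
  - apply Rmult_le_pos; [exact hg|]. apply IZR_le, Z.lt_le_incl, lucasU_pos.
  - apply Rmult_le_compat_l; [exact hg | apply lucasU_le_pow].
Qed.

Variable x : nat -> Z.
Hypotheses (x_rec : forall k, x (S (S k)) = (P * x (S k) - Q * x k)%Z)
  (x0_pos : (0 < x 0)%Z) (x1_pos : (0 < x 1)%Z).

Let x_pos := rec_pos_all P Q x x_rec P_pos Q_nonpos x0_pos x1_pos.

Lemma rec_ge_pow j : (IZR (x 1) - beta * IZR (x 0)) * alpha ^ j <= IZR (x (S (S j))).
Proof.
  assert (eigen := rec_eigen P Q x x_rec alpha beta P_sum Q_prod (S j)).
  assert (mono : IZR (x (S j)) <= IZR (x (S (S j)))).
  { apply IZR_le, (rec_succ_le P Q x x_rec P_pos Q_nonpos); lia. }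
  assert (pos : 0 < IZR (x (S j))) by apply IZR_lt, x_pos.
  set (c := IZR (x 1) - beta * IZR (x 0)) in *.
  (* alpha^(j+1) c = R_(j+2) - beta R_(j+1) <= (1 - beta) R_(j+2) <= alpha R_(j+2) *)
  apply Rmult_le_reg_l with alpha; [lra|].
  replace (alpha * (c * alpha ^ j)) with (alpha ^ S j * c) by (simpl; ring).
  rewrite <- eigen. nra.
Qed.

Lemma prod_from_ge a len :
  (IZR (x 1) - beta * IZR (x 0)) ^ len * alpha ^ list_sum (seq a len)
  <= IZR (prod_from x (S (S a)) len).
Proof.
  set (c := IZR (x 1) - beta * IZR (x 0)).
  replace (c ^ len * alpha ^ list_sum (seq a len))
    with (fold_right Rmult 1 (map (fun i => c * alpha ^ i) (seq a len)))
    by now rewrite Rprod_geometric, length_seq.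
  assert (c_pos : 0 < c).
  { pose proof (IZR_lt _ _ x0_pos). pose proof (IZR_lt _ _ x1_pos). unfold c. nra. }
  rewrite !prod_from_shift, IZR_prod_from. apply Rprod_le. intros j _.
  split; [|apply rec_ge_pow].
  apply Rmult_le_pos; [lra | apply pow_le; lra].
Qed.

Lemma lcm_from_lower_bound (PQ_coprime : Z.gcd P Q = 1%Z) (x1Q_coprime : Z.gcd (x 1) Q = 1%Z)
  a k :
  (IZR (x 1) - beta * IZR (x 0)) ^ S k * alpha ^ list_sum (seq a (S k))
  <= IZR (Z.gcd (x 0) (x 1)) ^ k * alpha ^ list_sum (seq 0 k)
     * IZR (lcm_from x (S (S a)) (S k)).
Proof.
  assert (g_pos := gcd_pos_r (x 0) (x 1) x1_pos).
  set (g := Z.gcd (x 0) (x 1)) in *.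
  set (N := prod_from (fun j => g * lucasU P Q (S j))%Z 0 k).
  set (L := lcm_from x (S (S a)) (S k)).
  assert (hdiv : (prod_from x (S (S a)) (S k) | N * L)%Z).
  { apply prod_divide_lcm. intros b j. now apply gcd_divide_lucasU. }
  assert (N_pos : (0 < N)%Z).
  { apply prod_from_pos. intro j. apply Z.mul_pos_pos; [exact g_pos | apply lucasU_pos]. }
  assert (L_pos : (0 < L)%Z) by (apply lcm_from_pos, x_pos).
  apply Z.divide_pos_le in hdiv; [|now apply Z.mul_pos_pos].
  apply IZR_le in hdiv. rewrite mult_IZR in hdiv.
  apply (Rle_trans _ _ _ (prod_from_ge a (S k))), (Rle_trans _ _ _ hdiv).
  apply Rmult_le_compat_r; [apply IZR_le; lia|].
  apply prod_lucasU_le. lia.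
Qed.

End RealBounds.

Lemma char_roots_spec (P Q : Z) (alpha beta : R) :
  (0 < P)%Z -> (Q < 0)%Z ->
  (forall x, x ^ 2 - IZR P * x + IZR Q = (x - alpha) * (x - beta)) ->
  Rabs beta <= Rabs alpha ->
  IZR P = alpha + beta /\ IZR Q = alpha * beta /\ beta < 0 /\ 1 - beta <= alpha.
Proof.
  intros hP hQ hroots habs.
  assert (P_ge1 : 1 <= IZR P) by (apply IZR_le; lia). apply IZR_lt in hQ.
  assert (Q_prod : IZR Q = alpha * beta) by (specialize (hroots 0); simpl in hroots; lra).
  assert (P_sum : IZR P = alpha + beta)
    by (specialize (hroots 1); rewrite Q_prod in hroots; simpl in hroots; lra).
  assert (beta_neg : beta < 0).
  { destruct (Rlt_or_le beta 0) as [|beta_nonneg]; [assumption|].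
    assert (alpha < 0) by nra.
    rewrite (Rabs_right beta), (Rabs_left alpha) in habs by lra. lra. }
  repeat split; try assumption. lra.
Qed.

Lemma list_sum_seq a len : (2 * list_sum (seq a len) + len = len * (2 * a + len))%nat.
Proof.
  revert a. induction len as [|len IH]; intro a; [reflexivity|].
  change (list_sum (seq a (S len))) with (a + list_sum (seq (S a) len))%nat.
  specialize (IH (S a)). nia.
Qed.

Lemma lcm_window n m :
  (2 <= n)%nat -> (1 <= m)%nat -> (m <= (n + 1) / 2 + 1)%nat ->
  exists a k, (m <= S (S a))%nat /\ (S (S a) + S k = S n)%nat /\
    (INR n - 1) / 2 <= INR (S k) /\
    INR n ^ 2 / 4 - INR n / 2 - 7 / 4 + INR (list_sum (seq 0 k))
      <= INR (list_sum (seq a (S k))).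
Proof.
  intros hn hm1 hm2.
  enough (exists a k, (m <= S (S a))%nat /\ (S (S a) + S k = S n)%nat /\
    (n <= 2 * k + 3)%nat /\
    (n * n + 4 * list_sum (seq 0 k) <= 4 * list_sum (seq a (S k)) + 2 * n + 7)%nat)
    as (a & k & ham & hlen & hk & hexp).
  { exists a, k. split; [exact ham|]. split; [exact hlen|].
    set (E := list_sum (seq a (S k))) in *. set (F := list_sum (seq 0 k)) in *.
    apply le_INR in hk, hexp. rewrite S_INR.
    rewrite plus_INR, mult_INR in hk. rewrite !plus_INR, !mult_INR in hexp.
    simpl INR in hk, hexp. split; lra. }
  pose proof (Nat.div_mod_eq (n + 1) 2). pose proof (Nat.mod_upper_bound (n + 1) 2).
  destruct (Nat.Even_or_Odd n) as [[[|j] ->] | [[|j] ->]]; try lia.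
  - exists j, j.
    pose proof (list_sum_seq j (S j)). pose proof (list_sum_seq 0 j).
    repeat split; lia || nia.
  - exists (S j), j.
    pose proof (list_sum_seq (S j) (S j)). pose proof (list_sum_seq 0 j).
    repeat split; lia || nia.
Qed.

Lemma Rpower_scaled_bound (G c alpha L s e : R) (k E F : nat) :
  0 < G <= c -> 1 <= alpha -> s <= INR (S k) -> e + INR F <= INR E ->
  c ^ S k * alpha ^ E <= G ^ k * alpha ^ F * L ->
  G * Rpower (c / G) s * Rpower alpha e <= L.
Proof.
  intros [G_pos G_le_c] alpha_ge1 hs he hbound.
  set (x := c / G).
  assert (x_ge1 : 1 <= x).
  { apply Rmult_le_reg_r with G; [lra|].
    unfold x, Rdiv. rewrite Rmult_assoc, Rinv_l; lra. }
  assert (hx : Rpower x s <= x ^ S k)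
    by (rewrite <- Rpower_pow by lra; now apply Rle_Rpower).
  assert (ha : Rpower alpha e * alpha ^ F <= alpha ^ E)
    by (rewrite <- !Rpower_pow, <- Rpower_plus by lra; now apply Rle_Rpower).
  assert (hc : c = G * x) by (unfold x; field; lra).
  assert (GkaF_pos : 0 < G ^ k * alpha ^ F) by (apply Rmult_lt_0_compat; apply pow_lt; lra).
  apply Rmult_le_reg_r with (G ^ k * alpha ^ F); [exact GkaF_pos|].
  apply Rle_trans with (G ^ S k * x ^ S k * alpha ^ E).
  - replace (G * Rpower x s * Rpower alpha e * (G ^ k * alpha ^ F))
      with (G ^ S k * Rpower x s * (Rpower alpha e * alpha ^ F)) by (simpl; ring).
    assert (0 < G ^ S k) by (apply pow_lt; lra).
    assert (0 < Rpower x s) by apply exp_pos.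
    assert (0 < Rpower alpha e * alpha ^ F)
      by (apply Rmult_lt_0_compat; [apply exp_pos | apply pow_lt; lra]).
    apply Rmult_le_compat; [nra | lra | | exact ha].
    apply Rmult_le_compat_l; [lra | exact hx].
  - rewrite <- Rpow_mult_distr, <- hc. lra.
Qed.

Theorem theorem3 (P Q : Z) (Rs : nat -> Z) (alpha beta : R)
  (hP : (0 < P)%Z) (hQ : (Q < 0)%Z)
  (hR0 : (0 < Rs 0%nat)%Z) (hR1 : (0 < Rs 1%nat)%Z)
  (hgPQ : Z.gcd P Q = 1%Z) (hgR1Q : Z.gcd (Rs 1%nat) Q = 1%Z)
  (hrec : forall k : nat, Rs (S (S k)) = (P * Rs (S k) - Q * Rs k)%Z)
  (hroots : forall x : R, x ^ 2 - IZR P * x + IZR Q = (x - alpha) * (x - beta))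
  (habs : Rabs beta <= Rabs alpha)
  (n m : nat) (hn : (2 <= n)%nat) (hm1 : (1 <= m)%nat)
  (hm2 : (m <= (n + 1) / 2 + 1)%nat) :
  IZR (lcm_range Rs m n) >=
    IZR (Z.gcd (Rs 0%nat) (Rs 1%nat))
    * Rpower ((IZR (Rs 1%nat) + IZR (Rs 0%nat) * Rabs beta)
              / IZR (Z.gcd (Rs 0%nat) (Rs 1%nat)))
             ((INR n - 1) / 2)
    * Rpower alpha (INR n ^ 2 / 4 - INR n / 2 - 7 / 4).
Proof.
  destruct (char_roots_spec P Q alpha beta hP hQ hroots habs)
    as (P_sum & Q_prod & beta_neg & alpha_ge).
  destruct (lcm_window n m hn hm1 hm2) as (a & k & ham & hlen & hs & he).
  assert (g_pos := IZR_lt _ _ (gcd_pos_r (Rs 0%nat) (Rs 1%nat) hR1)).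
  assert (g_le : IZR (Z.gcd (Rs 0%nat) (Rs 1%nat)) <= IZR (Rs 1%nat))
    by (apply IZR_le, Z.divide_pos_le; [exact hR1 | apply Z.gcd_divide_r]).
  assert (R0_pos : 0 < IZR (Rs 0%nat)) by now apply IZR_lt.
  rewrite Rabs_left by exact beta_neg.
  apply Rle_ge, Rle_trans with (IZR (lcm_from Rs (S (S a)) (S k))).
  - apply (Rpower_scaled_bound _ _ _ _ _ _ k (list_sum (seq a (S k))) (list_sum (seq 0 k)));
      [nra | lra | exact hs | exact he |].
    replace (IZR (Rs 1%nat) + IZR (Rs 0%nat) * - beta)
      with (IZR (Rs 1%nat) - beta * IZR (Rs 0%nat)) by ring.
    now apply (lcm_from_lower_bound P Q alpha beta P_sum Q_prod beta_neg alpha_ge Rs hrec).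
  - apply IZR_le, lcm_from_le_lcm_range; [|exact ham | exact hlen].
    exact (rec_pos_all P Q Rs hrec hP (Z.lt_le_incl _ _ hQ) hR0 hR1).
Qed.
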